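(* For any finite simple graph $X$ and any update sequence $\pi\in S_X$ there exists a bijection $\psi:\mathcal{S}\to\mathcal{S}$ such that $\psi\circ\mathbf{F}^\uparrow_\pi=\mathbf{F}^\downarrow_\pi\circ\psi$; that is, $\mathbf{F}^\uparrow_\pi$ and $\mathbf{F}^\downarrow_\pi$ are topologically conjugate (their phase spaces are isomorphic as directed graphs).
   Context: Let $X$ be a finite simple graph with vertices $1,\dots,n$; $d(v)$ is the degree of $v$ and $n[v]$ the closed neighborhood of $v$. An extended vertex state is $s_v=(x_v,k_v)\in\{0,1\}\times\{1,\dots,d(v)+1\}$; $\mathcal{S}=\prod_v(\{0,1\}\times\{1,\dots,d(v)+1\})$. Let $\sigma(x[v])=|\{u\in n[v]:x_u=1\}|$. Both vertex functions set $x_v'=1$ iff $\sigma(x[v])\ge k_v$ (else $0$). Increasing: $k_v'=k_v+1$ if $x_v=0$ and $\sigma(x[v])\ge k_v$, else $k_v'=k_v$. Decreasing: $k_v'=k_v-1$ if $x_v=1$ and $\sigma(x[v])<k_v$, else $k_v'=k_v$. The local maps $F^\uparrow_v,F^\downarrow_v:\mathcal{S}\to\mathcal{S}$ update only coordinate $v$ by the respective rule. For a permutation $\pi=(\pi_1,\dots,\pi_n)$ of the vertices, $\mathbf{F}^\star_\pi=F^\star_{\pi_n}\circ\cdots\circ F^\star_{\pi_1}$ for $\star\in\{\uparrow,\downarrow\}$. *)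

From mathcomp Require Import all_boot.
From mathcomp Require Import zify.
Set Implicit Arguments. Unset Strict Implicit. Unset Printing Implicit Defensive.

Section Defs.
Variables (T : finType) (e : rel T).

Definition deg (v : T) : nat := #|[set u | e v u]|.

Definition cnbhd (v : T) : {set T} := [set u | (u == v) || e v u].

(* raw extended states: v |-> (x_v, k_v) *)
Definition rawstate := {ffun T -> bool * nat}.

Definition sigma (s : rawstate) (v : T) : nat :=
  #|[set u in cnbhd v | (s u).1]|.

Definition admissible (s : rawstate) : bool :=
  [forall v, (1 <= (s v).2 <= deg v + 1)%N].

Definition upd_up (s : rawstate) (v : T) : bool * nat :=
  let x := (s v).1 in let k := (s v).2 in
  ((k <= sigma s v)%N,
   if ~~ x && (k <= sigma s v)%N then k.+1 else k).

Definition upd_down (s : rawstate) (v : T) : bool * nat :=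
  let x := (s v).1 in let k := (s v).2 in
  ((k <= sigma s v)%N,
   if x && (sigma s v < k)%N then k.-1 else k).

Definition rawF_up (v : T) (s : rawstate) : rawstate :=
  [ffun u => if u == v then upd_up s v else s u].
Definition rawF_down (v : T) (s : rawstate) : rawstate :=
  [ffun u => if u == v then upd_down s v else s u].


Lemma sigma_le_deg (s : rawstate) v : ~~ (s v).1 -> (sigma s v <= deg v)%N.
Proof.
move=> xv; apply: subset_leq_card; apply/subsetP => u.
rewrite !inE => /andP[/orP[/eqP -> | ->] //].
by rewrite (negbTE xv).
Qed.

Lemma sigma_ge1 (s : rawstate) v : (s v).1 -> (0 < sigma s v)%N.
Proof.
move=> xv; apply/card_gt0P; exists v; by rewrite !inE eqxx xv.
Qed.

Lemma rawF_up_adm v s : admissible s -> admissible (rawF_up v s).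
Proof.
move=> /forallP adm; apply/forallP => u; rewrite ffunE.
case: eqP => [-> | _]; last exact: adm.
rewrite /upd_up /=.
have /andP[h1 h2] := adm v.
case: ifP => // /andP[xv kle].
have hd := sigma_le_deg xv.
apply/andP; split; lia.
Qed.

Lemma rawF_down_adm v s : admissible s -> admissible (rawF_down v s).
Proof.
move=> /forallP adm; apply/forallP => u; rewrite ffunE.
case: eqP => [-> | _]; last exact: adm.
rewrite /upd_down /=.
have /andP[h1 h2] := adm v.
case: ifP => // /andP[xv klt].
have := sigma_ge1 xv => hs.
apply/andP; split; lia.
Qed.

Definition state := {s : rawstate | admissible s}.

Definition F_up (v : T) (s : state) : state :=
  exist _ (rawF_up v (val s)) (rawF_up_adm v (valP s)).
Definition F_down (v : T) (s : state) : state :=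
  exist _ (rawF_down v (val s)) (rawF_down_adm v (valP s)).

Definition SDS_up (pi : seq T) (s : state) : state :=
  foldl (fun t v => F_up v t) s pi.
Definition SDS_down (pi : seq T) (s : state) : state :=
  foldl (fun t v => F_down v t) s pi.

End Defs.

From mathcomp Require Import all_boot.
From mathcomp Require Import zify.
Set Implicit Arguments. Unset Strict Implicit. Unset Printing Implicit Defensive.

(** The conjugacy is the "complement" map (x_v, k_v) |-> (1 - x_v, d(v) + 2 - k_v).
    It replaces sigma(x[v]) by |n[v]| - sigma(x[v]) = d(v) + 1 - sigma(x[v]), so the
    firing test k_v <= sigma becomes its negation and the increasing threshold update
    of an inactive vertex becomes the decreasing update of an active one. Hence it
    conjugates every local map F^up_v to F^down_v, and therefore every composition of
    them, whatever the update word. *)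

Lemma foldl_conj (S A : Type) (f : S -> S) (g h : A -> S -> S) :
  (forall a s, f (g a s) = h a (f s)) ->
  forall p s, f (foldl (fun t a => g a t) s p) = foldl (fun t a => h a t) (f s) p.
Proof. by move=> fgh; elim=> [|a p IHp] s //=; rewrite IHp fgh. Qed.

Section Complement.
Variables (T : finType) (e : rel T).
Hypothesis e_irr : irreflexive e.

Definition complement (s : rawstate T) : rawstate T :=
  [ffun u => (~~ (s u).1, (deg e u + 2 - (s u).2)%N)].

Lemma complement_admissible s : admissible e s -> admissible e (complement s).
Proof.
move=> /forallP adm; apply/forallP => u; rewrite ffunE /=.
by have /andP[k_gt0 k_le] := adm u; apply/andP; split; lia.
Qed.

Lemma complementK s : admissible e s -> complement (complement s) = s.
Proof.
move=> /forallP adm; apply/ffunP => u; rewrite !ffunE /=.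
have /andP[k_gt0 k_le] := adm u.
by case: (s u) k_gt0 k_le => x k /= k_gt0 k_le; rewrite negbK; congr pair; lia.
Qed.

Lemma card_cnbhd v : #|cnbhd e v| = (deg e v).+1.
Proof.
have -> : cnbhd e v = v |: [set u | e v u] by apply/setP => u; rewrite !inE.
by rewrite cardsU1 inE e_irr.
Qed.

Lemma sigma_le_card s v : (sigma e s v <= (deg e v).+1)%N.
Proof.
rewrite -card_cnbhd; apply: subset_leq_card; apply/subsetP => u.
by rewrite inE => /andP[].
Qed.

Lemma sigma_complement s v :
  sigma e (complement s) v = ((deg e v).+1 - sigma e s v)%N.
Proof.
rewrite /sigma -card_cnbhd -(cardsID [set u | (s u).1] (cnbhd e v)).
have -> : [set u in cnbhd e v | (complement s u).1] =
          cnbhd e v :\: [set u | (s u).1].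
  by apply/setP => u; rewrite !inE ffunE /= andbC.
have -> : [set u in cnbhd e v | (s u).1] = cnbhd e v :&: [set u | (s u).1].
  by apply/setP => u; rewrite !inE.
lia.
Qed.

Lemma upd_down_complement s v : admissible e s ->
  upd_down e (complement s) v =
  (~~ (upd_up e s v).1, (deg e v + 2 - (upd_up e s v).2)%N).
Proof.
move=> /forallP adm; rewrite /upd_up /upd_down sigma_complement !ffunE /=.
have /andP[k_gt0 k_le] := adm v; have := sigma_le_card s v.
case: (s v) k_gt0 k_le => x k /= k_gt0 k_le.
set d := deg e v; set m := sigma e s v => m_le.
have fire_complement : (d + 2 - k <= d.+1 - m)%N = ~~ (k <= m)%N.
  by apply/idP/idP; lia.
have drop_complement : (d.+1 - m < d + 2 - k)%N = (k <= m)%N.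
  by apply/idP/idP; lia.
rewrite fire_complement drop_complement; congr pair.
by case: x => //=; case: ifP; lia.
Qed.

Lemma complement_rawF_up v s : admissible e s ->
  complement (rawF_up e v s) = rawF_down e v (complement s).
Proof.
move=> adm; apply/ffunP => u; rewrite !ffunE.
case: eqP => [-> | _] //.
by rewrite upd_down_complement.
Qed.

Definition complement_state (s : state e) : state e :=
  exist _ (complement (val s)) (complement_admissible (valP s)).

Lemma complement_stateK : involutive complement_state.
Proof. by move=> s; apply: val_inj; exact: complementK (valP s). Qed.

Lemma complement_state_F_up v s :
  complement_state (F_up v s) = F_down v (complement_state s).
Proof. by apply: val_inj; exact: complement_rawF_up (valP s). Qed.

End Complement.

Theorem proposition3p4 (T : finType) (e : rel T)
  (e_sym : symmetric e) (e_irr : irreflexive e)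
  (pi : seq T) (hpi : perm_eq pi (enum T)) :
  exists psi : state e -> state e,
    bijective psi /\
    (forall s, psi (@SDS_up T e pi s) = @SDS_down T e pi (psi s)).
Proof.
exists (@complement_state T e); split.
  exact: inv_bij (@complement_stateK T e).
exact: foldl_conj (complement_state_F_up e_irr) pi.
Qed.
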